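(* Let $M$ be a duplicial module in a pre-additive category, and define $D_n=\sum_{i=0}^{n-1}b_n\kappa_n^i:M_n\to M_{n-1}$ for $n\ge0$ (so $D_0=0$). Then for all $n\ge0$, $$d_{n-1}D_n+D_{n+1}d_n=1-\pi_n\qquad\text{and}\qquad D_{n-1}D_n=0\ (n\ge1).$$
   Context: Let $\mathcal A$ be a pre-additive category. Let $\Lambda_+$ be the category with objects $[n]$, $n\ge0$, where $\Lambda_+([m],[n])$ is the set of weakly monotone $f:\mathbb Z\to\mathbb Z$ with $f(j+m+1)=f(j)+n+1$ for all $j$ and $f(0)\ge0$. Define $\varepsilon^n_i:[n-1]\to[n]$ ($n\ge1$, $0\le i\le n$) by $\varepsilon^n_i(j)=j$ for $0\le j<i$, $j+1$ for $i\le j\le n-1$, and $\eta^n_i:[n+1]\to[n]$ ($0\le i\le n+1$) by $\eta^n_i(j)=j$ for $0\le j\le i$, $j-1$ for $i<j\le n+1$. A duplicial module is a functor $M:\Lambda_+^{op}\to\mathcal A$; $M_n=M([n])$, $\partial_{n,i}=M(\varepsilon^n_i):M_n\to M_{n-1}$, $s_{n,i}=M(\eta^n_i):M_n\to M_{n+1}$. Convention $M_{-1}=0$, maps into/out of it zero. Define $b_n=\sum_{i=0}^n(-1)^i\partial_{n,i}$ ($b_0=0$), $d_n=\sum_{i=0}^{n+1}(-1)^is_{n,i}$ ($d_{-1}=0$), the Karoubi operator $\kappa_n=(-1)^n(\partial_{n+1,0}s_{n,n+1}-s_{n-1,n}\partial_{n,0})$ (so $\kappa_0=\partial_{1,0}s_{0,1}$),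 and the Dwyer–Kan operator $\pi_n=(-1)^n\partial_{n+1,0}\kappa_{n+1}^n s_{n,n+1}$. *)

From HB Require Import structures.
From mathcomp Require Import all_boot all_order all_algebra.
Set Implicit Arguments. Unset Strict Implicit. Unset Printing Implicit Defensive.
Import Order.TTheory GRing.Theory Num.Theory.
Local Open Scope ring_scope.

Record preadditive := PreAdditive {
  Ob : Type;
  Hom : Ob -> Ob -> zmodType;
  cmp : forall a b c : Ob, Hom b c -> Hom a b -> Hom a c;
  idm : forall a : Ob, Hom a a;
  compA : forall a b c d (h : Hom c d) (g : Hom b c) (f : Hom a b),
    cmp h (cmp g f) = cmp (cmp h g) f;
  comp1m : forall a b (f : Hom a b), cmp (idm b) f = f;
  compm1 : forall a b (f : Hom a b), cmp f (idm a) = f;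
  compDl : forall a b c (g1 g2 : Hom b c) (f : Hom a b),
    cmp (g1 + g2) f = cmp g1 f + cmp g2 f;
  compDr : forall a b c (g : Hom b c) (f1 f2 : Hom a b),
    cmp g (f1 + f2) = cmp g f1 + cmp g f2 }.
Arguments Hom : clear implicits.
Arguments cmp {_ a b c}.
Arguments idm {_} a.

(** Morphisms [m] -> [n] of Lambda_+ : weakly monotone f : Z -> Z with
    f (j + m + 1) = f j + n + 1 and f 0 >= 0. *)
Definition lam_hom (m n : nat) (f : int -> int) : Prop :=
  [/\ (forall i j : int, i <= j -> f i <= f j),
      (forall j : int, f (j + m.+1%:Z) = f j + n.+1%:Z) &
      0 <= f 0].

(** The action
    is given on all functions Z -> Z, but only its values on Lambda_+
    morphisms matter (functor laws are only required there). *)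
Record duplicial (C : preadditive) := Duplicial {
  dM : nat -> Ob C;
  dact : forall m n : nat, (int -> int) -> Hom C (dM n) (dM m);
  dact_id : forall n : nat, dact n n id = idm (dM n);
  dact_comp : forall (m n p : nat) (f g : int -> int),
    lam_hom m n f -> lam_hom n p g ->
    dact m p (fun j => g (f j)) = cmp (dact m n f) (dact n p g) }.

(** epsilon^n_i : [n-1] -> [n] (source has n points, period n), given on
    0 <= j <= n-1 and extended by periodicity. *)
Definition eps (n i : nat) (j : int) : int :=
  let q := (j %/ n%:Z)%Z in let r := (j %% n%:Z)%Z in
  q * n.+1%:Z + (if r < i%:Z then r else r + 1).

(** eta^n_i : [n+1] -> [n] (source period n+2, target period n+1). *)
Definition eta (n i : nat) (j : int) : int :=
  let q := (j %/ n.+2%:Z)%Z in let r := (j %% n.+2%:Z)%Z in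
  q * n.+1%:Z + (if r <= i%:Z then r else r - 1).

Section Ops.
Variables (C : preadditive) (M : duplicial C).
Local Notation MM := (dM M).
Local Notation H := (Hom C).

Definition sgn (k : nat) : int := (-1) ^+ k.

(** del n i = partial_{n+1,i} : M_{n+1} -> M_n *)
Definition del (n i : nat) : H (MM n.+1) (MM n) := dact M n n.+1 (eps n.+1 i).
Definition sdeg (n i : nat) : H (MM n) (MM n.+1) := dact M n.+1 n (eta n i).

(** bb n = b_{n+1} *)
Definition bb (n : nat) : H (MM n.+1) (MM n) :=
  \sum_(i < n.+2) del n i *~ sgn i.
Definition dd (n : nat) : H (MM n) (MM n.+1) :=
  \sum_(i < n.+2) sdeg n i *~ sgn i.

Definition kappa (n : nat) : H (MM n) (MM n) :=
  match n as k return H (MM k) (MM k) with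
  | 0 => cmp (del 0 0) (sdeg 0 1)
  | m.+1 => (cmp (del m.+1 0) (sdeg m.+1 m.+2)
             - cmp (sdeg m m.+1) (del m 0)) *~ sgn m.+1
  end.

Definition kpow (n k : nat) : H (MM n) (MM n) :=
  iter k (fun h => cmp (kappa n) h) (idm (MM n)).

Definition piDK (n : nat) : H (MM n) (MM n) :=
  cmp (del n 0) (cmp (kpow n.+1 n) (sdeg n n.+1)) *~ sgn n.

(** DD n = D_{n+1} = sum_{i=0}^{n} b_{n+1} kappa_{n+1}^i : M_{n+1} -> M_n *)
Definition DD (n : nat) : H (MM n.+1) (MM n) :=
  \sum_(i < n.+1) cmp (bb n) (kpow n.+1 i).

(** dD n = d_{n-1} D_n : M_n -> M_n, which is 0 for n = 0 (M_{-1} = 0). *)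
Definition dD (n : nat) : H (MM n) (MM n) :=
  match n as k return H (MM k) (MM k) with
  | 0 => 0
  | m.+1 => cmp (dd m) (DD m)
  end.
End Ops.

(* The faces and degeneracies of M are the images of explicit periodic maps
   Z -> Z, so by functoriality every relation among them reduces to an identity
   of integer functions checked on one period.  The usual sign cancellations
   then give b b = 0, d d = 0 and b d + d b = 1 - kappa, so kappa commutes with
   b and d.  Hence d D + D d telescopes to 1 - kappa^n plus b kappa^n d, and
   since kappa^(n+1) kills the degeneracies s_0, ..., s_n this remainder is
   exactly the Dwyer-Kan correction.  Finally D D = 0 because b commutes with
   the powers of kappa and b b = 0. *)

From Pilot Require Import Defs.
From HB Require Import structures.
From mathcomp Require Import all_boot all_order all_algebra zify ring.
From Stdlib Require Import FunctionalExtensionality.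
Set Implicit Arguments. Unset Strict Implicit. Unset Printing Implicit Defensive.
Import Order.TTheory GRing.Theory Num.Theory.
Local Open Scope ring_scope.
(* Let [Hom] denote the hom-sets of Defs rather than the linear maps of vector.v. *)
Import Defs.

(* The extension of [u] from [0, p) to Z satisfying [f (x + p) = f x + P];
   [eps] and [eta] are of this form. *)
Definition per_ext (p P : int) (u : int -> int) (x : int) : int :=
  (x %/ p)%Z * P + u (x %% p)%Z.

Section PeriodicExtension.
Variables (p P : int) (u : int -> int).
Hypothesis p_gt0 : 0 < p.

Lemma per_ext_val q r : 0 <= r < p -> per_ext p P u (q * p + r) = q * P + u r.
Proof.
move=> r_range; have p_neq0 : p != 0 by rewrite gt_eqF.
rewrite /per_ext divzMDl // divz_small ?addr0; last by rewrite gez0_abs // ltW.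
by rewrite modzMDl modz_small.
Qed.

Lemma per_ext_small r : 0 <= r < p -> per_ext p P u r = u r.
Proof. by move=> r_range; have := per_ext_val 0 r_range; rewrite !mul0r !add0r. Qed.

Lemma per_ext_period : per_ext p P u p = P + u 0.
Proof. by have := @per_ext_val 1 0; rewrite lexx p_gt0 mul1r !addr0 mul1r => ->. Qed.

Lemma divz_decomp x : exists q r, x = q * p + r /\ 0 <= r < p.
Proof.
exists (x %/ p)%Z, (x %% p)%Z; split; first exact: divz_eq.
by rewrite modz_ge0 ?gt_eqF // ltz_pmod.
Qed.

Lemma per_extD x : per_ext p P u (x + p) = per_ext p P u x + P.
Proof.
have [q [r [-> r_range]]] := divz_decomp x.
rewrite (_ : q * p + r + p = (q + 1) * p + r); last by ring.
by rewrite !per_ext_val // mulrDl mul1r addrAC.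
Qed.

Lemma per_ext_mono : 0 <= P ->
  (forall r1 r2, 0 <= r1 -> r1 <= r2 -> r2 < p -> u r1 <= u r2) ->
  (forall r, 0 <= r < p -> u r <= u 0 + P) ->
  {homo per_ext p P u : x y / x <= y}.
Proof.
move=> P_ge0 u_mono u_bound x y.
have [q1 [r1 [-> r1_range]]] := divz_decomp x.
have [q2 [r2 [-> r2_range]]] := divz_decomp y.
move=> le_xy; rewrite !per_ext_val //.
case: (eqVneq q1 q2) le_xy => [<- le_xy|q12 le_xy].
  by rewrite lerD2l; apply: u_mono; nia.
have lt_q12 : q1 + 1 <= q2 by nia.
have := u_bound r1 r1_range; have : u 0 <= u r2 by apply: u_mono; lia.
have : (q1 + 1) * P <= q2 * P by nia.
lia.
Qed.
End PeriodicExtension.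

Lemma shiftMz (h : int -> int) (p P : int) :
  (forall x, h (x + p) = h x + P) -> forall q x, h (x + q * p) = h x + q * P.
Proof.
move=> hD; elim/int_rect=> [|k IH|k IH] x; first by rewrite !mul0r !addr0.
  rewrite (_ : x + k.+1%:Z * p = x + k%:Z * p + p); last by rewrite intS; ring.
  by rewrite hD IH intS; ring.
have := hD (x + - k.+1%:Z * p).
rewrite (_ : x + - k.+1%:Z * p + p = x + - k%:Z * p); last by rewrite intS; ring.
by rewrite IH => E; apply: (addIr P); rewrite -E intS; ring.
Qed.

Lemma eq_shift_period (h h' : int -> int) (m n : nat) :
  (forall x, h (x + m.+1%:Z) = h x + n.+1%:Z) ->
  (forall x, h' (x + m.+1%:Z) = h' x + n.+1%:Z) ->
  (forall r, 0 <= r <= m%:Z -> h r = h' r) -> h =1 h'.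
Proof.
move=> hD h'D eq_hh' x.
have [q [r [-> r_range]]] := divz_decomp (isT : 0 < m.+1%:Z) x.
rewrite addrC (shiftMz hD) (shiftMz h'D) eq_hh' //; lia.
Qed.

Lemma epsE n i : eps n i =1 per_ext n%:Z n.+1%:Z (fun r => if r < i%:Z then r else r + 1).
Proof. by []. Qed.

Lemma etaE n i : eta n i =1 per_ext n.+2%:Z n.+1%:Z (fun r => if r <= i%:Z then r else r - 1).
Proof. by []. Qed.

Lemma lam_eps n i : lam_hom n n.+1 (eps n.+1 i).
Proof.
split=> [x y le_xy|x|]; rewrite !epsE.
- apply: per_ext_mono => // [r1 r2 *|r r_range]; rewrite ?ltz_nat; do ![case: ifP]; lia.
- exact: per_extD.
- by rewrite per_ext_small //; case: ifP.
Qed.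

Lemma lam_eta n i : lam_hom n.+1 n (eta n i).
Proof.
split=> [x y le_xy|x|]; rewrite !etaE.
- apply: per_ext_mono => // [r1 r2 *|r r_range]; rewrite ?le0z_nat; do ![case: ifP]; lia.
- exact: per_extD.
- by rewrite per_ext_small.
Qed.

Lemma eps_period n i x : (0 < n)%N -> (i <= n)%N -> 0 <= x <= n%:Z ->
  eps n i x = (if x < i%:Z then x else x + 1) + (if (x == n%:Z) && (i == 0%N) then 1 else 0).
Proof.
move=> n_gt0 le_in x_range; have p_gt0 : 0 < n%:Z by rewrite ltz_nat.
rewrite epsE; have [->|x_neq_n] := eqVneq x n%:Z.
  rewrite per_ext_period //.
  by case: (eqVneq i 0%N) => [->|i_neq0] /=; last do ![case: ifP]; lia.
by rewrite per_ext_small ?addr0 //; lia.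
Qed.

Lemma eta_period n i x : (i <= n.+1)%N -> 0 <= x <= n.+2%:Z ->
  eta n i x = if x <= i%:Z then x else x - 1.
Proof.
move=> le_in x_range; rewrite etaE.
have [->|x_neq] := eqVneq x n.+2%:Z; last by rewrite per_ext_small //; lia.
by rewrite per_ext_period // le0z_nat; do ![case: ifP]; lia.
Qed.

Lemma lam_homD a b f : lam_hom a b f -> forall x, f (x + a.+1%:Z) = f x + b.+1%:Z.
Proof. by case. Qed.

Section Functoriality.
Variables (C : preadditive) (M : duplicial C).

Lemma eq_cmp_dact (a b b' c : nat) f g f' g' :
  lam_hom a b f -> lam_hom b c g -> lam_hom a b' f' -> lam_hom b' c g' ->
  (forall r, 0 <= r <= a%:Z -> g (f r) = g' (f' r)) ->
  cmp (dact M a b f) (dact M b c g) = cmp (dact M a b' f') (dact M b' c g').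
Proof.
move=> hf hg hf' hg' eq_period; rewrite -!dact_comp //; congr dact.
apply: functional_extensionality; apply: (eq_shift_period _ _ eq_period) => x.
  by rewrite (lam_homD hf) (lam_homD hg).
by rewrite (lam_homD hf') (lam_homD hg').
Qed.

Lemma cmp_dact_id (a b : nat) f g :
  lam_hom a b f -> lam_hom b a g -> (forall r, 0 <= r <= a%:Z -> g (f r) = r) ->
  cmp (dact M a b f) (dact M b a g) = idm (dM M a).
Proof.
move=> hf hg id_period; rewrite -dact_comp // -dact_id; congr dact.
apply: functional_extensionality; apply: (eq_shift_period _ _ id_period) => x //.
by rewrite (lam_homD hf) (lam_homD hg).
Qed.
End Functoriality.

Ltac eval_on_period r :=
  rewrite ?[eps _ _ r]eps_period ?[eta _ _ r]eta_period; try lia;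
  do ![case: ifP] => *; rewrite ?eps_period ?eta_period; try lia;
  do ![case: ifP] => *; lia.

Section SimplicialIdentities.
Variables (C : preadditive) (M : duplicial C).
Local Notation del := (del M).
Local Notation sdeg := (sdeg M).

Lemma del_del n i j : (i < j)%N -> (j <= n.+2)%N ->
  cmp (del n i) (del n.+1 j) = cmp (del n j.-1) (del n.+1 i).
Proof. by move=> *; apply: eq_cmp_dact; try apply: lam_eps; move=> r ?; eval_on_period r. Qed.

Lemma sdeg_sdeg n i j : (i <= j)%N -> (j <= n.+1)%N ->
  cmp (sdeg n.+1 i) (sdeg n j) = cmp (sdeg n.+1 j.+1) (sdeg n i).
Proof. by move=> *; apply: eq_cmp_dact; try apply: lam_eta; move=> r ?; eval_on_period r. Qed.

Lemma del_sdeg n j : (j <= n.+1)%N -> cmp (del n j) (sdeg n j) = idm (dM M n).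
Proof.
by move=> *; apply: cmp_dact_id; [apply: lam_eps|apply: lam_eta|move=> r ?; eval_on_period r].
Qed.

Lemma delS_sdeg n j : (j <= n)%N -> cmp (del n j.+1) (sdeg n j) = idm (dM M n).
Proof.
by move=> *; apply: cmp_dact_id; [apply: lam_eps|apply: lam_eta|move=> r ?; eval_on_period r].
Qed.

(* For i = 0 and j = m + 2 there is no such relation: that composite is the
   new term of the Karoubi operator. *)
Lemma del_sdeg_lt m i j : (i < j)%N -> (j <= m.+2)%N -> ~~ ((i == 0%N) && (j == m.+2)) ->
  cmp (del m.+1 i) (sdeg m.+1 j) = cmp (sdeg m j.-1) (del m i).
Proof.
move=> *; apply: eq_cmp_dact; try apply: lam_eps; try apply: lam_eta.
by move=> r ?; eval_on_period r.
Qed.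

Lemma del_sdeg_gt m i j : (j.+1 < i)%N -> (i <= m.+2)%N ->
  cmp (del m.+1 i) (sdeg m.+1 j) = cmp (sdeg m j) (del m i.-1).
Proof.
move=> *; apply: eq_cmp_dact; try apply: lam_eps; try apply: lam_eta.
by move=> r ?; eval_on_period r.
Qed.
End SimplicialIdentities.
Section PreadditiveComposition.
Variables (C : preadditive) (a b c : Ob C).

Definition cmpr (f : Hom C a b) (g : Hom C b c) : Hom C a c := cmp g f.
Definition cmpl (g : Hom C b c) (f : Hom C a b) : Hom C a c := cmp g f.

Fact cmpr_is_nmod_morphism f : nmod_morphism (cmpr f).
Proof.
split=> [|g1 g2]; last exact: compDl.
by apply: (addrI (cmp 0 f)); rewrite /cmpr -compDl !addr0.
Qed.

Fact cmpl_is_nmod_morphism g : nmod_morphism (cmpl g).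
Proof.
split=> [|f1 f2]; last exact: compDr.
by apply: (addrI (cmp g 0)); rewrite /cmpl -compDr !addr0.
Qed.

HB.instance Definition _ f :=
  GRing.isNmodMorphism.Build _ _ (cmpr f) (cmpr_is_nmod_morphism f).
HB.instance Definition _ g :=
  GRing.isNmodMorphism.Build _ _ (cmpl g) (cmpl_is_nmod_morphism g).

Lemma cmp0l (f : Hom C a b) : cmp (0 : Hom C b c) f = 0.
Proof. exact: (raddf0 (cmpr f)). Qed.
Lemma cmp0r (g : Hom C b c) : cmp g (0 : Hom C a b) = 0.
Proof. exact: (raddf0 (cmpl g)). Qed.
Lemma cmpNl (g : Hom C b c) (f : Hom C a b) : cmp (- g) f = - cmp g f.
Proof. exact: (raddfN (cmpr f)). Qed.
Lemma cmpNr (g : Hom C b c) (f : Hom C a b) : cmp g (- f) = - cmp g f.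
Proof. exact: (raddfN (cmpl g)). Qed.
Lemma cmpBl (g1 g2 : Hom C b c) (f : Hom C a b) : cmp (g1 - g2) f = cmp g1 f - cmp g2 f.
Proof. exact: (raddfB (cmpr f)). Qed.
Lemma cmpBr (g : Hom C b c) (f1 f2 : Hom C a b) : cmp g (f1 - f2) = cmp g f1 - cmp g f2.
Proof. exact: (raddfB (cmpl g)). Qed.
Lemma cmpzl (g : Hom C b c) (f : Hom C a b) z : cmp (g *~ z) f = cmp g f *~ z.
Proof. exact: (raddfMz (cmpr f)). Qed.
Lemma cmpzr (g : Hom C b c) (f : Hom C a b) z : cmp g (f *~ z) = cmp g f *~ z.
Proof. exact: (raddfMz (cmpl g)). Qed.
Lemma cmp_suml (I : Type) (r : seq I) (P : pred I) (F : I -> Hom C b c) (f : Hom C a b) :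
  cmp (\sum_(i <- r | P i) F i) f = \sum_(i <- r | P i) cmp (F i) f.
Proof. exact: (raddf_sum (cmpr f)). Qed.
Lemma cmp_sumr (I : Type) (r : seq I) (P : pred I) (F : I -> Hom C a b) (g : Hom C b c) :
  cmp g (\sum_(i <- r | P i) F i) = \sum_(i <- r | P i) cmp g (F i).
Proof. exact: (raddf_sum (cmpl g)). Qed.
End PreadditiveComposition.

Lemma sgnS k : sgn k.+1 = - sgn k.
Proof. by rewrite /sgn exprS mulN1r. Qed.

Lemma sgnD i j : sgn (i + j) = sgn i * sgn j.
Proof. by rewrite /sgn exprD. Qed.

Lemma sgn_sqr k : sgn k * sgn k = 1.
Proof. by rewrite /sgn -exprMn mulrNN mulr1 expr1n. Qed.

Lemma mulrz_sgnS (V : zmodType) (x : V) k : x *~ sgn k.+1 = - (x *~ sgn k).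
Proof. by rewrite sgnS mulrNz. Qed.

Section AlternatingSums.
Variable V : zmodType.

Lemma sum_triangle_exchange n (F : nat -> nat -> V) :
  \sum_(0 <= i < n) \sum_(0 <= j < i.+1) F i j = \sum_(0 <= j < n) \sum_(j <= i < n) F i j.
Proof.
elim: n => [|n IH]; first by rewrite !big_geq.
rewrite big_nat_recr //= IH.
under [RHS]eq_big_nat => j /andP[_ lt_jn] do rewrite big_nat_recr //=.
by rewrite big_split /= [in RHS]big_nat_recr //= [in X in _ + X + _]big_geq // addr0.
Qed.

Lemma alternating_sum_eq0 N (F : nat -> nat -> V) :
  (forall i j, (i < j)%N -> (j <= N.+1)%N -> F i j = F j.-1 i) ->
  \sum_(0 <= i < N.+1) \sum_(0 <= j < N.+2) F i j *~ sgn (i + j) = 0.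
Proof.
move=> FE.
have split_at_diag i : (0 <= i < N.+1)%N ->
  \sum_(0 <= j < N.+2) F i j *~ sgn (i + j) =
  \sum_(0 <= j < i.+1) F i j *~ sgn (i + j) - \sum_(i <= k < N.+1) F k i *~ sgn (k + i).
  move=> /andP[_ lt_iN]; rewrite (big_cat_nat _ (n := i.+1)) //=; last by lia.
  congr (_ + _); rewrite big_add1 /= -sumrN.
  by apply: eq_big_nat => k /andP[? ?]; rewrite FE //= addnS mulrz_sgnS addnC.
by rewrite (eq_big_nat _ _ split_at_diag) sumrB sum_triangle_exchange subrr.
Qed.

Lemma alternating_mixed_sum_eq0 N (F G : nat -> nat -> V) :
  (forall j, (j <= N)%N -> F j j = F j.+1 j) ->
  (forall i j, (i < j)%N -> (j <= N)%N -> F i j = G j.-1 i) ->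
  (forall i j, (j.+1 < i)%N -> (i <= N.+1)%N -> F i j = G j i.-1) ->
  \sum_(0 <= j < N.+1) \sum_(0 <= i < N.+2) F i j *~ sgn (i + j)
  + \sum_(0 <= j < N) \sum_(0 <= i < N.+1) G j i *~ sgn (i + j) = 0.
Proof.
move=> F_diag F_lt F_gt.
have split_at_diag j : (0 <= j < N.+1)%N ->
  \sum_(0 <= i < N.+2) F i j *~ sgn (i + j) =
  \sum_(0 <= i < j) G j.-1 i *~ sgn (i + j) -
  \sum_(j.+1 <= k < N.+1) G j k *~ sgn (k + j).
  move=> /andP[_ le_jN]; rewrite (big_cat_nat _ (n := j)) //=; last by lia.
  congr (_ + _); first by apply: eq_big_nat => i /andP[_ ?]; rewrite F_lt //; lia.
  rewrite big_ltn; last by lia.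
  rewrite big_ltn; last by lia.
  rewrite -F_diag; last by lia.
  rewrite addrA addSn mulrz_sgnS subrr add0r big_add1 /= -sumrN.
  by apply: eq_big_nat => i /andP[? ?]; rewrite F_gt; [rewrite /= addSn mulrz_sgnS|lia|lia].
rewrite (eq_big_nat _ _ split_at_diag) big_split /=.
rewrite big_nat_recl // big_geq // add0r big_nat_recr //= [\sum_(N.+1 <= k < N.+1) _]big_geq //.
rewrite subr0 -big_split /= -big_split /=.
apply: big1_seq => j /andP[_]; rewrite mem_index_iota => /andP[_ lt_jN].
rewrite [X in _ + X](big_cat_nat _ (n := j.+1)) //=; last by lia.
rewrite addrACA addNr addr0 -big_split /=.
by apply: big1_seq => i _; rewrite addnS mulrz_sgnS addNr.
Qed.
End AlternatingSums.
Section Duplicial.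
Variables (C : preadditive) (M : duplicial C).
Local Notation del := (Defs.del M).
Local Notation sdeg := (Defs.sdeg M).
Local Notation bb := (Defs.bb M).
Local Notation dd := (Defs.dd M).
Local Notation kappa := (Defs.kappa M).
Local Notation kpow := (Defs.kpow M).
Local Notation MM := (dM M).

Definition dd_trunc (n : nat) : Hom C (MM n) (MM n.+1) :=
  \sum_(i < n.+1) sdeg n i *~ sgn i.

Lemma bbE n : bb n = \sum_(0 <= i < n.+2) del n i *~ sgn i.
Proof. by rewrite big_mkord. Qed.

Lemma ddE n : dd n = \sum_(0 <= i < n.+2) sdeg n i *~ sgn i.
Proof. by rewrite /dd big_mkord. Qed.

Lemma dd_truncE n : dd_trunc n = \sum_(0 <= i < n.+1) sdeg n i *~ sgn i.
Proof. by rewrite /dd_trunc big_mkord. Qed.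

Lemma dd_split n : dd n = dd_trunc n + sdeg n n.+1 *~ sgn n.+1.
Proof. by rewrite ddE dd_truncE big_nat_recr. Qed.

Lemma cmp_alternating_sums (a b c : Ob C) (F : nat -> Hom C b c) (G : nat -> Hom C a b) m n :
  cmp (\sum_(0 <= i < m) F i *~ sgn i) (\sum_(0 <= j < n) G j *~ sgn j) =
  \sum_(0 <= i < m) \sum_(0 <= j < n) cmp (F i) (G j) *~ sgn (i + j).
Proof.
rewrite cmp_suml; apply: eq_bigr => i _.
rewrite cmpzl cmp_sumr mulrz_suml; apply: eq_bigr => j _.
by rewrite cmpzr sgnD mulrzA_C mulrC.
Qed.

Lemma bb_bb n : cmp (bb n) (bb n.+1) = 0.
Proof.
rewrite !bbE cmp_alternating_sums; apply: (@alternating_sum_eq0 _ n.+1) => i j *.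
exact: del_del.
Qed.

Lemma dd_dd n : cmp (dd n.+1) (dd n) = 0.
Proof.
rewrite !ddE cmp_alternating_sums exchange_big_nat /=.
under eq_bigr => j _ do under eq_bigr => i _ do rewrite addnC.
apply: (@alternating_sum_eq0 _ n.+1 (fun j i => cmp (sdeg n.+1 i) (sdeg n j))) => j i *.
by rewrite [RHS]sdeg_sdeg ?prednK //; lia.
Qed.

Lemma bb_dd_trunc0 : cmp (bb 0) (dd_trunc 0) = 0.
Proof.
rewrite bbE dd_truncE cmp_suml !big_nat_recl // !big_geq // !addr0 !cmpzl !cmpzr.
by rewrite del_sdeg // (delS_sdeg _ (n := 0)) // /sgn expr0 expr1 !mulr1z mulrN1z subrr.
Qed.

Lemma bb_dd_trunc m : cmp (bb m.+1) (dd_trunc m.+1) + cmp (dd_trunc m) (bb m) = 0.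
Proof.
rewrite !bbE !dd_truncE !cmp_alternating_sums [X in X + _]exchange_big_nat /=.
under [X in _ + X]eq_bigr => i _ do under eq_bigr => j _ do rewrite addnC.
apply: (@alternating_mixed_sum_eq0 _ m.+1 (fun i j => cmp (del m.+1 i) (sdeg m.+1 j))
          (fun j i => cmp (sdeg m j) (del m i))).
- by move=> j ? /=; rewrite del_sdeg ?delS_sdeg //; lia.
- by move=> i j * /=; rewrite del_sdeg_lt //; lia.
- by move=> i j * /=; rewrite del_sdeg_gt.
Qed.

Lemma bb_sdeg_last0 : cmp (bb 0) (sdeg 0 1) = kappa 0 - idm (MM 0).
Proof. by rewrite bbE cmp_suml !big_nat_recl // big_geq // addr0 !cmpzl del_sdeg. Qed.

Lemma bb_sdeg_last m : cmp (bb m.+1) (sdeg m.+1 m.+2) =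
  kappa m.+1 *~ sgn m.+1 + cmp (sdeg m m.+1) (bb m) + idm (MM m.+1) *~ sgn m.+2.
Proof.
rewrite /= -mulrzA sgn_sqr mulr1z !bbE cmp_suml cmp_sumr big_nat_recl // big_nat_recr //=.
rewrite [in RHS]big_nat_recl //.
under eq_big_nat => i /andP[_ lt_im] do rewrite cmpzl del_sdeg_lt -?cmpzr //; try lia.
rewrite !cmpzl !cmpzr del_sdeg // /sgn expr0 !mulr1z.
by rewrite addrA [X in _ = X + _]addrA subrK.
Qed.

Lemma bb_dd0 : cmp (bb 0) (dd 0) = idm (MM 0) - kappa 0.
Proof.
rewrite dd_split compDr bb_dd_trunc0 add0r cmpzr bb_sdeg_last0.
by rewrite /sgn expr1 mulrN1z opprB.
Qed.

Lemma bb_dd m : cmp (bb m.+1) (dd m.+1) + cmp (dd m) (bb m) = idm (MM m.+1) - kappa m.+1.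
Proof.
rewrite !dd_split compDr compDl !cmpzr !cmpzl bb_sdeg_last.
rewrite (sgnS m.+1) !mulrzDl !mulrNz -!mulrzA sgn_sqr mulr1 mulNrz -mulrzA sgn_sqr mulr1z opprK.
by rewrite addrACA bb_dd_trunc add0r addrAC subrK addrC.
Qed.

Lemma kappa0E : kappa 0 = idm (MM 0) - cmp (bb 0) (dd 0).
Proof. by rewrite bb_dd0 opprB addrC subrK. Qed.

Lemma kappaSE m : kappa m.+1 = idm (MM m.+1) - (cmp (bb m.+1) (dd m.+1) + cmp (dd m) (bb m)).
Proof. by rewrite bb_dd opprB addrC subrK. Qed.

Lemma kappa_bb n : cmp (kappa n) (bb n) = cmp (bb n) (kappa n.+1).
Proof.
rewrite kappaSE cmpBr compm1 compDr !compA bb_bb cmp0l add0r.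
case: n => [|m]; first by rewrite kappa0E cmpBl comp1m.
by rewrite kappaSE cmpBl comp1m compDl -[cmp (cmp (dd m) (bb m)) _]compA bb_bb cmp0r addr0.
Qed.

Lemma kappa_dd n : cmp (kappa n.+1) (dd n) = cmp (dd n) (kappa n).
Proof.
rewrite kappaSE cmpBl comp1m compDl -!compA dd_dd cmp0r add0r.
case: n => [|m]; first by rewrite kappa0E cmpBr compm1 compA.
by rewrite kappaSE cmpBr compm1 compDr [cmp (dd m.+1) (cmp (dd m) _)]compA dd_dd cmp0l addr0 !compA.
Qed.

Lemma kpowS n k : kpow n k.+1 = cmp (kappa n) (kpow n k).
Proof. by []. Qed.

Lemma kpowSr n k : kpow n k.+1 = cmp (kpow n k) (kappa n).
Proof.
elim: k => [|k IH]; first by rewrite /= compm1 comp1m.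
by rewrite [LHS]kpowS [in LHS]IH compA.
Qed.

Lemma kpow_bb n k : cmp (kpow n k) (bb n) = cmp (bb n) (kpow n.+1 k).
Proof.
elim: k => [|k IH]; first by rewrite /= comp1m compm1.
by rewrite /= -compA IH compA kappa_bb -compA.
Qed.

Lemma kpow_dd n k : cmp (kpow n.+1 k) (dd n) = cmp (dd n) (kpow n k).
Proof.
elim: k => [|k IH]; first by rewrite /= comp1m compm1.
by rewrite /= -compA IH compA kappa_dd -compA.
Qed.

Lemma kappa_sdeg0 m : cmp (kappa m.+1) (sdeg m 0) = 0.
Proof.
rewrite [kappa _]/= cmpzl cmpBl -!compA -(@sdeg_sdeg _ _ m 0 m.+1) //.
by rewrite compA !del_sdeg // comp1m compm1 subrr mul0rz.
Qed.

Lemma kappa_sdeg m j : (0 < j)%N -> (j <= m)%N ->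
  cmp (kappa m.+1) (sdeg m j) = - cmp (sdeg m j.-1) (kappa m).
Proof.
case: m => [|k] j_gt0 le_jm; first by lia.
rewrite [kappa k.+2]/= [kappa k.+1]/= cmpzl cmpzr cmpBl cmpBr -!compA.
rewrite -(@sdeg_sdeg _ _ k.+1 j k.+2); try lia.
rewrite compA del_sdeg_lt; try lia.
rewrite -compA (@del_sdeg_lt _ _ k 0 j); try lia.
rewrite [cmp (sdeg k.+1 k.+2) _]compA -(@sdeg_sdeg _ _ k j.-1 k.+1); try lia.
by rewrite -compA (sgnS k.+1) mulrNz.
Qed.

Lemma kpow_sdeg m j k : (j <= m)%N -> (j < k)%N -> cmp (kpow m.+1 k) (sdeg m j) = 0.
Proof.
elim: j k => [|j IH] [|k] le_jm lt_jk //; rewrite kpowSr -compA.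
  by rewrite kappa_sdeg0 cmp0r.
by rewrite kappa_sdeg // cmpNr compA IH ?cmp0l ?oppr0 //; lia.
Qed.

Lemma kpow_dd_trunc m : cmp (kpow m.+1 m.+1) (dd_trunc m) = 0.
Proof.
rewrite dd_truncE cmp_sumr big1_seq // => j; rewrite mem_index_iota => /andP[_ lt_jm].
by rewrite cmpzr kpow_sdeg // mul0rz.
Qed.

Lemma del_last_kappa n : cmp (del n n.+1) (kappa n.+1) = 0.
Proof.
rewrite [kappa _]/= cmpzr cmpBr !compA -(@del_del _ _ n 0 n.+2) //.
by rewrite -compA !del_sdeg // compm1 comp1m subrr mul0rz.
Qed.

Lemma del_kappa n i : (0 < i)%N -> (i <= n)%N ->
  cmp (del n i) (kappa n.+1) = - cmp (kappa n) (del n i.+1).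
Proof.
case: n => [|k] i_gt0 le_in; first by lia.
rewrite [kappa k.+2]/= [kappa k.+1]/= cmpzr cmpzl cmpBr cmpBl !compA.
rewrite -(@del_del _ _ k.+1 0 i.+1); try lia.
rewrite -[cmp (cmp (del k.+1 0) _) _]compA (@del_sdeg_lt _ _ k.+1 i.+1 k.+3); try lia.
rewrite (@del_sdeg_lt _ _ k i k.+2); try lia.
rewrite /= -[cmp (cmp (sdeg k k.+1) _) (del k.+1 0)]compA -(@del_del _ _ k 0 i.+1) //.
by rewrite !compA (sgnS k.+1) mulrNz.
Qed.

Lemma del_kpow n k i : (0 < i)%N -> (i <= n.+1)%N ->
  cmp (del n i) (kpow n.+1 k) =
  if (i + k <= n.+1)%N then cmp (kpow n k) (del n (i + k)) *~ sgn k else 0.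
Proof.
elim: k i => [|k IH] i i_gt0 le_in.
  by rewrite /= compm1 comp1m addn0 le_in /sgn expr0 mulr1z.
rewrite !kpowS compA.
have [->|neq_in] := eqVneq i n.+1.
  by rewrite del_last_kappa cmp0l ifF //; lia.
rewrite del_kappa ?cmpNl -?compA ?IH; try lia.
rewrite addSnnS; case: ifP => _; last by rewrite cmp0r oppr0.
by rewrite cmpzr compA (sgnS k) mulrNz.
Qed.

Lemma del0_kpow n : cmp (del n 0) (kpow n.+1 n) =
  cmp (kpow n n) (bb n) + cmp (kpow n n) (del n n.+1) *~ sgn n.
Proof.
rewrite kpow_bb bbE cmp_suml big_nat_recl // big_nat_recl //.
rewrite big1_seq ?addr0 => [|i]; last first.
  rewrite mem_index_iota => /andP[_ lt_in].
  by rewrite cmpzl del_kpow ?ifF ?mul0rz //; lia.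
rewrite !cmpzl (@del_kpow n n 1) // ifT // add1n.
by rewrite /sgn expr0 mulr1z expr1 mulrN1z -/(sgn n) subrK.
Qed.

Lemma piDKE n :
  piDK M n = cmp (kpow n n) (cmp (bb n) (sdeg n n.+1)) *~ sgn n + kpow n n.
Proof.
rewrite /piDK compA del0_kpow compDl cmpzl mulrzDl -mulrzA sgn_sqr mulr1z.
by rewrite -!compA del_sdeg // compm1.
Qed.

Lemma piDK0 : piDK M 0 = kappa 0.
Proof. by rewrite piDKE bb_sdeg_last0 /= comp1m /sgn expr0 mulr1z subrK. Qed.

Lemma piDKS m : piDK M m.+1 =
  kpow m.+1 m.+2 + cmp (kpow m.+1 m.+1) (cmp (sdeg m m.+1) (bb m)) *~ sgn m.+1.
Proof.
rewrite piDKE bb_sdeg_last !compDr [cmp _ (kappa m.+1 *~ _)]cmpzr -kpowSr.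
rewrite [cmp _ (idm _ *~ _)]cmpzr compm1 !mulrzDl -!mulrzA sgn_sqr !mulr1z.
by rewrite (sgnS m.+1) mulNr sgn_sqr mulrN1z -addrA addNr addr0.
Qed.

Lemma dd_bb_kpow m : cmp (cmp (dd m) (bb m)) (kpow m.+1 m.+1) =
  cmp (kpow m.+1 m.+1) (cmp (sdeg m m.+1) (bb m)) *~ sgn m.+1.
Proof.
rewrite -compA -kpow_bb compA -kpow_dd -compA dd_split compDl compDr.
by rewrite [cmp (kpow _ _) (cmp (dd_trunc m) _)]compA kpow_dd_trunc cmp0l add0r cmpzl cmpzr.
Qed.

Lemma sum_kpow_telescope n k :
  \sum_(i < k) (kpow n i - kpow n i.+1) = idm (MM n) - kpow n k.
Proof.
rewrite -(big_mkord xpredT (fun i => kpow n i - kpow n i.+1)).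
rewrite (telescope_sumr_eq (fun i => - kpow n i)) => [|//|i _]; first by rewrite opprK addrC.
by rewrite opprK addrC.
Qed.

Lemma homotopy0 : cmp (DD M 0) (dd 0) = idm (MM 0) - piDK M 0.
Proof. by rewrite /DD big_ord1 /= compm1 bb_dd0 piDK0. Qed.

Lemma homotopyS m :
  cmp (dd m) (DD M m) + cmp (DD M m.+1) (dd m.+1) = idm (MM m.+1) - piDK M m.+1.
Proof.
rewrite /DD cmp_sumr cmp_suml [X in _ + X]big_ord_recr.
under eq_bigr => i _ do rewrite compA.
under [X in _ + (X + _)]eq_bigr => i _ do rewrite -compA kpow_dd compA.
rewrite -compA kpow_dd compA addrA -big_split [X in X + _]/=.
under eq_bigr => i _ do rewrite -compDl addrC bb_dd cmpBl comp1m -kpowS.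
rewrite sum_kpow_telescope.
have -> : cmp (bb m.+1) (dd m.+1) = idm (MM m.+1) - kappa m.+1 - cmp (dd m) (bb m).
  by rewrite -bb_dd addrK.
rewrite !cmpBl comp1m dd_bb_kpow piDKS -kpowS.
by rewrite !addrA subrK opprD addrA.
Qed.

Lemma DD_DD n : cmp (DD M n) (DD M n.+1) = 0.
Proof.
rewrite /DD cmp_suml big1 // => i _; rewrite cmp_sumr big1 // => j _.
by rewrite -compA [cmp (kpow _ _) (cmp (bb _) _)]compA kpow_bb -compA compA bb_bb cmp0l.
Qed.
End Duplicial.

Theorem mainTheorem18 (C : preadditive) (M : duplicial C) :
  (forall n : nat,
     dD M n + cmp (DD M n) (dd M n) = idm (dM M n) - piDK M n) /\
  (forall n : nat, cmp (DD M n) (DD M n.+1) = 0).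
Proof.
split=> [[|m]|]; last exact: DD_DD.
  by rewrite add0r homotopy0.
exact: homotopyS.
Qed.
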